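(* Let $\phi_1,\phi_2\in D=\{z\in\mathbb{C};|z|<1\}$ and let $Z$ be a random variable on $\partial D=\{z\in\mathbb{C};|z|=1\}$ with density, with respect to arc length, $$f(z)=\frac{1}{2\pi}\frac{|1-\phi_1\overline{\phi_2}|^2}{1-|\phi_1\overline{\phi_2}|^2}\frac{1-|\phi_1|^2}{|z-\phi_1|^2}\frac{1-|\phi_2|^2}{|z-\phi_2|^2},\qquad z\in\partial D.$$ Then for every nonnegative integer $n$ (the $n$th trigonometric moment), $$E(Z^n)=\begin{cases}\dfrac{(1-|\phi_2|^2)(1-\overline{\phi_1}\phi_2)\phi_1^{n+1}-(1-|\phi_1|^2)(1-\phi_1\overline{\phi_2})\phi_2^{n+1}}{(\phi_1-\phi_2)(1-|\phi_1\overline{\phi_2}|^2)}, & \phi_1\ne\phi_2,\\[2ex] \dfrac{1+n+(1-n)|\phi_1|^2}{1+|\phi_1|^2}\phi_1^n, & \phi_1=\phi_2.\end{cases}$$ *)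

From Stdlib Require Export Reals.
From Coquelicot Require Export Coquelicot.

Open Scope C_scope.

(* The point e^{i theta} of the unit circle; theta in [0, 2 pi] is the arc-length parameter. *)
Definition circ (theta : R) : C := (cos theta, sin theta).

Definition dens (phi1 phi2 z : C) : R :=
  (/ (2 * PI) *
   ((Cmod (1 - phi1 * Cconj phi2)) ^ 2 / (1 - (Cmod (phi1 * Cconj phi2)) ^ 2)) *
   ((1 - (Cmod phi1) ^ 2) / (Cmod (z - phi1)) ^ 2) *
   ((1 - (Cmod phi2) ^ 2) / (Cmod (z - phi2)) ^ 2))%R.

(* Integrand of E(Z^n) = \int_{\partial D} z^n f(z) ds(z), parametrized by arc length. *)
Definition moment_integrand (phi1 phi2 : C) (n : nat) (theta : R) : C :=
  RtoC (dens phi1 phi2 (circ theta)) * (circ theta) ^ n.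

(* On the unit circle the Poisson kernel splits as
   (1 - |a|^2) / |z - a|^2 = 1 / (1 - a/z) + conj(a) z / (1 - conj(a) z),
   a geometric series in 1/z plus one in z.  Multiplying the two kernels, the
   moment integral of z^n splits into a purely anti-analytic term, whose value
   is the complete homogeneous sum of degree n in phi1, phi2, two mixed terms,
   evaluated by partial fractions, and a purely analytic term, which vanishes.
   Instead of expanding series, the integrals I_k of z^k h / (1 - a z) are
   computed from the recurrence I_k = a I_(k+1) (k >= 1), which forces I_k = 0
   because the I_k are bounded and |a| < 1. *)
From Stdlib Require Import Lra Lia Psatz FunctionalExtensionality.
Open Scope C_scope.

Definition is_period_RInt (f : R -> C) (v : C) : Prop :=
  is_RInt (V := C_R_CompleteNormedModule) f 0 (2 * PI) v.

Lemma is_period_RInt_eq (f g : R -> C) (v w : C) :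
  (forall t, f t = g t) -> v = w -> is_period_RInt f v -> is_period_RInt g w.
Proof. intros Hfg <-. apply is_RInt_ext. intros t _. apply Hfg. Qed.

Lemma is_period_RInt_plus (f g : R -> C) (v w : C) :
  is_period_RInt f v -> is_period_RInt g w -> is_period_RInt (fun t => f t + g t) (v + w).
Proof. intros Hf Hg. exact (is_RInt_plus _ _ _ _ _ _ Hf Hg). Qed.

Lemma is_period_RInt_minus (f g : R -> C) (v w : C) :
  is_period_RInt f v -> is_period_RInt g w -> is_period_RInt (fun t => f t - g t) (v - w).
Proof. intros Hf Hg. exact (is_RInt_minus _ _ _ _ _ _ Hf Hg). Qed.

Lemma is_period_RInt_scal (c : C) (f : R -> C) (v : C) :
  is_period_RInt f v -> is_period_RInt (fun t => c * f t) (c * v).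
Proof.
  intros Hf.
  pose proof (is_RInt_fct_extend_fst (U := R_NormedModule) (V := R_NormedModule) _ _ _ _ Hf) as H1.
  pose proof (is_RInt_fct_extend_snd (U := R_NormedModule) (V := R_NormedModule) _ _ _ _ Hf) as H2.
  apply (is_RInt_fct_extend_pair (U := R_NormedModule) (V := R_NormedModule)); simpl.
  - apply (is_RInt_minus (V := R_NormedModule)); apply (is_RInt_scal (V := R_NormedModule)); auto.
  - apply (is_RInt_plus (V := R_NormedModule)); apply (is_RInt_scal (V := R_NormedModule)); auto.
Qed.

Lemma is_period_RInt_const (c : C) : is_period_RInt (fun _ => c) (RtoC (2 * PI) * c).
Proof.
  pose proof (is_RInt_const (V := C_R_CompleteNormedModule) 0 (2 * PI) c) as Hc.
  rewrite Rminus_0_r, scal_R_Cmult in Hc. exact Hc.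
Qed.

Lemma is_period_RInt_unique (f : R -> C) (v w : C) :
  is_period_RInt f v -> is_period_RInt f w -> v = w.
Proof.
  intros Hv Hw. rewrite <- (is_RInt_unique (V := C_R_CompleteNormedModule) _ _ _ _ Hv).
  exact (is_RInt_unique (V := C_R_CompleteNormedModule) _ _ _ _ Hw).
Qed.

Lemma Cmod_is_period_RInt_le (f : R -> C) (v : C) (M : R) :
  (forall t, Cmod (f t) <= M)%R -> is_period_RInt f v -> (Cmod v <= 2 * PI * M)%R.
Proof.
  intros HM Hf. rewrite Cmod_norm. replace (2 * PI * M)%R with ((2 * PI - 0) * M)%R by ring.
  apply (norm_RInt_le_const (V := C_R_NormedModule) f 0 (2 * PI) v M); auto.
  - pose proof PI_RGT_0; lra.
  - intros t _. rewrite <- Cmod_norm. auto.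
Qed.

Definition Ccontinuous (f : R -> C) : Prop := forall t, continuous f t.

Lemma continuous_C_pair (f : R -> C) (t : R) :
  continuous (fun t => fst (f t)) t -> continuous (fun t => snd (f t)) t -> continuous f t.
Proof.
  intros H1 H2. apply filterlim_locally. intros eps.
  apply (proj1 (filterlim_locally _ _)) with (eps := eps) in H1.
  apply (proj1 (filterlim_locally _ _)) with (eps := eps) in H2.
  generalize (filter_and _ _ H1 H2). apply filter_imp. intros x [Hx1 Hx2]. split; auto.
Qed.

Lemma continuous_C_fst (f : R -> C) (t : R) : continuous f t -> continuous (fun t => fst (f t)) t.
Proof. intros Hf. apply (continuous_comp f fst); auto. apply continuous_fst. Qed.

Lemma continuous_C_snd (f : R -> C) (t : R) : continuous f t -> continuous (fun t => snd (f t)) t.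
Proof. intros Hf. apply (continuous_comp f snd); auto. apply continuous_snd. Qed.

Lemma Ccontinuous_const (c : C) : Ccontinuous (fun _ => c).
Proof. intros t. apply continuous_const. Qed.

Lemma Ccontinuous_minus (f g : R -> C) :
  Ccontinuous f -> Ccontinuous g -> Ccontinuous (fun t => f t - g t).
Proof. intros Hf Hg t. exact (continuous_minus (V := C_R_NormedModule) f g t (Hf t) (Hg t)). Qed.

Lemma Ccontinuous_mult (f g : R -> C) :
  Ccontinuous f -> Ccontinuous g -> Ccontinuous (fun t => f t * g t).
Proof.
  intros Hf Hg t.
  pose proof (continuous_C_fst f t (Hf t)) as F1. pose proof (continuous_C_snd f t (Hf t)) as F2.
  pose proof (continuous_C_fst g t (Hg t)) as G1. pose proof (continuous_C_snd g t (Hg t)) as G2.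
  apply continuous_C_pair.
  - exact (continuous_minus (V := R_NormedModule) _ _ t
      (continuous_mult (K := R_AbsRing) _ _ t F1 G1) (continuous_mult (K := R_AbsRing) _ _ t F2 G2)).
  - exact (continuous_plus (V := R_NormedModule) _ _ t
      (continuous_mult (K := R_AbsRing) _ _ t F1 G2) (continuous_mult (K := R_AbsRing) _ _ t F2 G1)).
Qed.

Lemma Ccontinuous_inv (f : R -> C) :
  Ccontinuous f -> (forall t, f t <> 0) -> Ccontinuous (fun t => / f t).
Proof.
  intros Hf Hnz t.
  pose proof (continuous_C_fst f t (Hf t)) as F1. pose proof (continuous_C_snd f t (Hf t)) as F2.
  (* The squared modulus, in the unfolded shape produced by [Cinv]. *)
  set (sq := fun t => (fst (f t) * (fst (f t) * 1) + snd (f t) * (snd (f t) * 1))%R).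
  assert (Hsq : continuous sq t).
  { pose proof (continuous_const (U := R_UniformSpace) 1%R t) as C1.
    exact (continuous_plus (V := R_NormedModule) _ _ t
      (continuous_mult (K := R_AbsRing) _ _ t F1 (continuous_mult (K := R_AbsRing) _ _ t F1 C1))
      (continuous_mult (K := R_AbsRing) _ _ t F2 (continuous_mult (K := R_AbsRing) _ _ t F2 C1))). }
  assert (Hsq0 : sq t <> 0%R).
  { intros E. apply (Hnz t), Cmod_eq_0. unfold Cmod. simpl. unfold sq in E. rewrite E. apply sqrt_0. }
  pose proof (continuous_Rinv_comp _ t Hsq Hsq0) as Hi.
  apply continuous_C_pair; simpl.
  - exact (continuous_mult (K := R_AbsRing) _ _ t F1 Hi).
  - exact (continuous_mult (K := R_AbsRing) _ _ t (continuous_opp (V := R_NormedModule) _ t F2) Hi).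
Qed.

Lemma Ccontinuous_pow (f : R -> C) (n : nat) : Ccontinuous f -> Ccontinuous (fun t => f t ^ n).
Proof.
  intros Hf. induction n as [|n IH]; simpl.
  - apply Ccontinuous_const.
  - apply Ccontinuous_mult; auto.
Qed.

Lemma is_period_RInt_RInt (f : R -> C) :
  Ccontinuous f -> is_period_RInt f (RInt (V := C_R_CompleteNormedModule) f 0 (2 * PI)).
Proof. intros Hf. apply RInt_correct, ex_RInt_continuous. intros t _. apply Hf. Qed.

Lemma Ccontinuous_circ : Ccontinuous circ.
Proof. intros t. apply continuous_C_pair; simpl. apply continuous_cos. apply continuous_sin. Qed.

Lemma Cmod_circ (t : R) : Cmod (circ t) = 1%R.
Proof.
  unfold Cmod, circ; simpl. pose proof (sin2_cos2 t) as H. unfold Rsqr in H.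
  replace (cos t * (cos t * 1) + sin t * (sin t * 1))%R with 1%R by lra. apply sqrt_1.
Qed.

Lemma circ_neq0 (t : R) : circ t <> 0.
Proof. intros E. pose proof (Cmod_circ t) as H. rewrite E, Cmod_0 in H. lra. Qed.

Lemma circ_plus (s t : R) : circ (s + t) = circ s * circ t.
Proof. unfold Cmult, circ; simpl. rewrite cos_plus, sin_plus. f_equal; ring. Qed.

Lemma circ_pow (t : R) (k : nat) : circ t ^ k = circ (INR k * t).
Proof.
  induction k as [|k IH]; simpl Cpow.
  - unfold circ. rewrite Rmult_0_l, cos_0, sin_0. reflexivity.
  - rewrite IH, <- circ_plus, S_INR. f_equal. ring.
Qed.

Lemma circ_inv (t : R) : / circ t = circ (- t).
Proof.
  assert (H : circ t * circ (- t) = 1).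
  { rewrite <- circ_plus, Rplus_opp_r. unfold circ. rewrite cos_0, sin_0. reflexivity. }
  rewrite <- (Cmult_1_r (/ circ t)), <- H, Cmult_assoc, Cinv_l by apply circ_neq0.
  apply Cmult_1_l.
Qed.

Lemma is_period_RInt_circ_scale (c : R) :
  c <> 0%R -> sin (c * (2 * PI)) = 0%R -> cos (c * (2 * PI)) = 1%R ->
  is_period_RInt (fun t => circ (c * t)) 0.
Proof.
  intros Hc Hs Hco.
  assert (Hlin : forall t, continuous (fun t => c * t)%R t).
  { intros t. apply (ex_derive_continuous (fun t => c * t)%R). auto_derive. auto. }
  apply (is_RInt_fct_extend_pair (U := R_NormedModule) (V := R_NormedModule)); simpl.
  - pose proof (is_RInt_derive (V := R_CompleteNormedModule)
      (fun t => sin (c * t) / c)%R (fun t => cos (c * t)) 0 (2 * PI)) as H.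
    cbv beta in H. rewrite Hs, Rmult_0_r, sin_0 in H. unfold minus, plus, opp in H; simpl in H.
    replace (0 / c + - (0 / c))%R with 0%R in H by (field; auto). apply H.
    + intros t _. auto_derive; auto. field. auto.
    + intros t _. apply (continuous_comp (fun t => c * t)%R cos); auto. apply continuous_cos.
  - pose proof (is_RInt_derive (V := R_CompleteNormedModule)
      (fun t => - cos (c * t) / c)%R (fun t => sin (c * t)) 0 (2 * PI)) as H.
    cbv beta in H. rewrite Hco, Rmult_0_r, cos_0 in H. unfold minus, plus, opp in H; simpl in H.
    replace (- (1) / c + - (- (1) / c))%R with 0%R in H by (field; auto). apply H.
    + intros t _. auto_derive; auto. field. auto.
    + intros t _. apply (continuous_comp (fun t => c * t)%R sin); auto. apply continuous_sin.
Qed.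

Lemma is_period_RInt_circ_pow (k : nat) : (1 <= k)%nat -> is_period_RInt (fun t => circ t ^ k) 0.
Proof.
  intros Hk. apply (is_period_RInt_eq (fun t => circ (INR k * t)) _ 0).
  { intros t. symmetry. apply circ_pow. }
  { reflexivity. }
  assert (Hper : (INR k * (2 * PI) = 0 + 2 * INR k * PI)%R) by ring.
  apply is_period_RInt_circ_scale; rewrite ?Hper.
  - apply not_0_INR. lia.
  - rewrite sin_period. apply sin_0.
  - rewrite cos_period. apply cos_0.
Qed.

Lemma is_period_RInt_circ_inv_pow (k : nat) :
  (1 <= k)%nat -> is_period_RInt (fun t => (/ circ t) ^ k) 0.
Proof.
  intros Hk. apply (is_period_RInt_eq (fun t => circ (- INR k * t)) _ 0).
  { intros t. rewrite circ_inv, circ_pow. f_equal. ring. }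
  { reflexivity. }
  assert (Hper : (- INR k * (2 * PI) = - (0 + 2 * INR k * PI))%R) by ring.
  apply is_period_RInt_circ_scale; rewrite ?Hper.
  - apply Ropp_neq_0_compat, not_0_INR. lia.
  - rewrite sin_neg, sin_period, sin_0. apply Ropp_0.
  - rewrite cos_neg, cos_period. apply cos_0.
Qed.

Lemma le_pow_lt_1_0 (x q c : R) : (0 <= q < 1)%R -> (forall N, x <= q ^ N * c)%R -> (x <= 0)%R.
Proof.
  intros Hq Hx. apply Rnot_lt_le. intros Hpos.
  assert (Hc : (0 < c)%R) by (specialize (Hx 0%nat); simpl in Hx; lra).
  destruct (pow_lt_1_zero q ltac:(rewrite Rabs_right; lra) (x / c)%R
    ltac:(apply Rdiv_lt_0_compat; auto)) as [N HN].
  specialize (HN N (le_n N)). rewrite Rabs_right in HN by (apply Rle_ge, pow_le; lra).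
  specialize (Hx N). apply (Rmult_lt_compat_r c) in HN; auto.
  unfold Rdiv in HN. rewrite Rmult_assoc, Rinv_l, Rmult_1_r in HN; lra.
Qed.

Lemma bounded_geometric_recurrence_0 (a : C) (I : nat -> C) (M : R) :
  (Cmod a < 1)%R -> (forall k, Cmod (I k) <= M)%R -> (forall k, I k = a * I (S k)) -> I 0%nat = 0.
Proof.
  intros Ha HM Hrec.
  assert (Hiter : forall N, I 0%nat = a ^ N * I N).
  { induction N as [|N IH]; simpl; [ring |]. rewrite IH, Hrec. ring. }
  apply Cmod_eq_0, Rle_antisym; [| apply Cmod_ge_0].
  apply (le_pow_lt_1_0 _ (Cmod a) M); [split; [apply Cmod_ge_0 | auto] |].
  intros N. rewrite (Hiter N), Cmod_mult, Cmod_pow.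
  apply Rmult_le_compat_l; [apply pow_le, Cmod_ge_0 | apply HM].
Qed.

Lemma one_sub_mul_neq0 (a x : C) : (Cmod a < 1)%R -> (Cmod x <= 1)%R -> 1 - a * x <> 0.
Proof.
  intros Ha Hx E. assert (E' : a * x = 1) by (rewrite <- (Cplus_0_l (a * x)), <- E; ring).
  apply (f_equal Cmod) in E'. rewrite Cmod_mult, Cmod_1 in E'.
  pose proof (Cmod_ge_0 a). pose proof (Cmod_ge_0 x). nra.
Qed.

Lemma sub_neq0_Cmod_1 (z a : C) : Cmod z = 1%R -> (Cmod a < 1)%R -> z - a <> 0.
Proof.
  intros Hz Ha E. assert (z = a) by (rewrite <- (Cplus_0_l a), <- E; ring). subst. lra.
Qed.

Lemma Cmod_inv_one_sub_mul_le (a x : C) :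
  (Cmod a < 1)%R -> Cmod x = 1%R -> (Cmod (/ (1 - a * x)) <= / (1 - Cmod a))%R.
Proof.
  intros Ha Hx. rewrite Cmod_inv by (apply one_sub_mul_neq0; lra).
  apply Rinv_le_contravar; [lra |].
  pose proof (Cmod_triangle (1 - a * x) (a * x)) as T.
  replace (1 - a * x + a * x) with (RtoC 1) in T by ring.
  rewrite Cmod_1, Cmod_mult, Hx in T. lra.
Qed.

(* Both [circ] and [fun t => / circ t] are unit loops, so the analytic and the
   anti-analytic parts of the integrand are handled by the same lemmas. *)
Record unit_loop (e : R -> C) : Prop := {
  unit_loop_Cmod : forall t, Cmod (e t) = 1%R;
  unit_loop_continuous : Ccontinuous e;
  unit_loop_pow : forall m, (1 <= m)%nat -> is_period_RInt (fun t => e t ^ m) 0;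
  unit_loop_inv_pow : forall m, (1 <= m)%nat -> is_period_RInt (fun t => (/ e t) ^ m) 0 }.

Lemma unit_loop_neq0 (e : R -> C) (t : R) : unit_loop e -> e t <> 0.
Proof. intros He E. pose proof (unit_loop_Cmod e He t) as H. rewrite E, Cmod_0 in H. lra. Qed.

Lemma unit_loop_circ : unit_loop circ.
Proof.
  split.
  - apply Cmod_circ.
  - apply Ccontinuous_circ.
  - apply is_period_RInt_circ_pow.
  - apply is_period_RInt_circ_inv_pow.
Qed.

Lemma unit_loop_inv (e : R -> C) : unit_loop e -> unit_loop (fun t => / e t).
Proof.
  intros He. pose proof (unit_loop_neq0 e) as Hnz. split.
  - intros t. rewrite Cmod_inv, (unit_loop_Cmod e He); auto. apply Rinv_1.
  - apply Ccontinuous_inv; auto. apply He.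
  - apply He.
  - intros m Hm. eapply is_period_RInt_eq; [| reflexivity | apply (unit_loop_pow e He m Hm)].
    intros t. cbv beta. f_equal. field. auto.
Qed.

(* [complete_hom a b m] is the sum of the [a ^ i * b ^ j] with [i + j = m]. *)
Fixpoint complete_hom (a b : C) (m : nat) : C :=
  match m with
  | O => 1
  | S k => b ^ S k + a * complete_hom a b k
  end.

Lemma complete_hom_0r (a : C) (m : nat) : complete_hom a 0 m = a ^ m.
Proof. induction m as [|m IH]; simpl; [reflexivity |]. rewrite IH. ring. Qed.

Lemma complete_hom_neq (a b : C) (m : nat) :
  a <> b -> complete_hom a b m = (a ^ S m - b ^ S m) / (a - b).
Proof.
  intros Hab. apply Cminus_eq_contra in Hab.
  induction m as [|m IH]; simpl complete_hom; [| rewrite IH]; simpl; field; auto.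
Qed.

Lemma complete_hom_diag (a : C) (m : nat) : complete_hom a a m = RtoC (INR (S m)) * a ^ m.
Proof.
  induction m as [|m IH]; simpl complete_hom; [simpl; ring |].
  rewrite IH, (S_INR (S m)), RtoC_plus. simpl. ring.
Qed.

Definition geom (e : R -> C) (a : C) (t : R) : C := / (1 - a * e t).

(* [h] has no Fourier modes of negative order with respect to [e]. *)
Record analytic_along (e h : R -> C) : Prop := {
  analytic_along_continuous : Ccontinuous h;
  analytic_along_bounded : exists M, forall t, (Cmod (h t) <= M)%R;
  analytic_along_pow_mul : forall m, (1 <= m)%nat -> is_period_RInt (fun t => e t ^ m * h t) 0 }.

Section UnitLoop.

Variable e : R -> C.
Hypothesis He : unit_loop e.

Lemma geom_denom_neq0 (a : C) (t : R) : (Cmod a < 1)%R -> 1 - a * e t <> 0.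
Proof. intros Ha. apply one_sub_mul_neq0; auto. rewrite (unit_loop_Cmod e He). lra. Qed.

Lemma Ccontinuous_geom (a : C) : (Cmod a < 1)%R -> Ccontinuous (geom e a).
Proof.
  intros Ha. apply Ccontinuous_inv; [| intros t; apply geom_denom_neq0; auto].
  apply Ccontinuous_minus, Ccontinuous_mult; [apply Ccontinuous_const .. | apply He].
Qed.

Lemma analytic_along_mul_geom (h : R -> C) (a : C) :
  analytic_along e h -> (Cmod a < 1)%R -> analytic_along e (fun t => h t * geom e a t).
Proof.
  intros [Hh_cont [M HM] Hh_pow] Ha.
  set (g := fun t => h t * geom e a t).
  assert (Hg_cont : Ccontinuous g) by (apply Ccontinuous_mult; auto; apply Ccontinuous_geom; auto).
  assert (Hg_bound : forall t, (Cmod (g t) <= M * / (1 - Cmod a))%R).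
  { intros t. unfold g, geom. rewrite Cmod_mult.
    apply Rmult_le_compat; [apply Cmod_ge_0 | apply Cmod_ge_0 | auto |].
    apply Cmod_inv_one_sub_mul_le; auto. apply He. }
  split; [exact Hg_cont | eauto |].
  set (I := fun k => RInt (V := C_R_CompleteNormedModule) (fun t => e t ^ k * g t) 0 (2 * PI)).
  assert (HI : forall k, is_period_RInt (fun t => e t ^ k * g t) (I k)).
  { intros k. apply is_period_RInt_RInt, Ccontinuous_mult; auto.
    apply Ccontinuous_pow, He. }
  (* [g = h + a e g], so the moments of [g] satisfy [I k = a I (k+1)] for [k >= 1]. *)
  assert (Hrec : forall k, (1 <= k)%nat -> I k = a * I (S k)).
  { intros k Hk. apply (is_period_RInt_unique (fun t => e t ^ k * g t)); [apply HI |].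
    eapply is_period_RInt_eq;
      [| apply Cplus_0_l | apply (is_period_RInt_plus _ _ _ _ (Hh_pow k Hk)
                                    (is_period_RInt_scal a _ _ (HI (S k))))].
    intros t. unfold g, geom. simpl. field. apply geom_denom_neq0; auto. }
  assert (HIbound : forall k, (Cmod (I k) <= 2 * PI * (M * / (1 - Cmod a)))%R).
  { intros k. apply (Cmod_is_period_RInt_le (fun t => e t ^ k * g t)); [| apply HI].
    intros t. rewrite Cmod_mult, Cmod_pow, (unit_loop_Cmod e He), pow1, Rmult_1_l. auto. }
  intros m Hm. assert (HIm : (I m : C) = 0).
  { rewrite <- (Nat.add_0_r m).
    apply (bounded_geometric_recurrence_0 a (fun j => I (m + j)%nat)
             (2 * PI * (M * / (1 - Cmod a))) Ha).
    - intros j. apply HIbound.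
    - intros j. cbv beta. rewrite Nat.add_succ_r. apply Hrec. lia. }
  rewrite <- HIm. apply HI.
Qed.

Lemma analytic_along_geom (a : C) : (Cmod a < 1)%R -> analytic_along e (geom e a).
Proof.
  intros Ha.
  replace (geom e a) with (fun t => (fun _ => 1) t * geom e a t)
    by (apply functional_extensionality; intros t; apply Cmult_1_l).
  apply analytic_along_mul_geom; auto. split.
  - apply Ccontinuous_const.
  - exists 1%R. intros t. rewrite Cmod_1. lra.
  - intros m Hm. eapply is_period_RInt_eq; [| reflexivity | apply (unit_loop_pow e He m Hm)].
    intros t. symmetry. apply Cmult_1_r.
Qed.

Lemma is_period_RInt_pow_geom2 (c d : C) (m : nat) :
  (Cmod c < 1)%R -> (Cmod d < 1)%R -> (1 <= m)%nat ->
  is_period_RInt (fun t => e t ^ m * (geom e c t * geom e d t)) 0.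
Proof.
  intros Hc Hd Hm. apply analytic_along_mul_geom; auto. apply analytic_along_geom; auto.
Qed.

(* Dividing by [1 - a e] turns the Taylor coefficients [k b^i] of [h] into
   [k * complete_hom a b i]. *)
Lemma is_period_RInt_inv_pow_mul_geom (h : R -> C) (k a b : C) :
  analytic_along e h -> (Cmod a < 1)%R ->
  (forall i, is_period_RInt (fun t => (/ e t) ^ i * h t) (k * b ^ i)) ->
  forall m, is_period_RInt (fun t => (/ e t) ^ m * (h t * geom e a t)) (k * complete_hom a b m).
Proof.
  intros Hh Ha Hcoef.
  pose proof (analytic_along_pow_mul e _ (analytic_along_mul_geom h a Hh Ha) 1 (le_n 1)) as H1.
  pose proof (unit_loop_neq0 e) as Hnz.
  induction m as [|m IH].
  - eapply is_period_RInt_eq;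
      [| | apply (is_period_RInt_plus _ _ _ _ (Hcoef 0%nat) (is_period_RInt_scal a _ _ H1))].
    + intros t. unfold geom. simpl. field. apply geom_denom_neq0; auto.
    + simpl. ring.
  - eapply is_period_RInt_eq;
      [| | apply (is_period_RInt_plus _ _ _ _ (Hcoef (S m)) (is_period_RInt_scal a _ _ IH))].
    + intros t. unfold geom. simpl. field. split; [apply geom_denom_neq0 | apply Hnz]; auto.
    + simpl. ring.
Qed.

Lemma is_period_RInt_inv_pow_geom (a : C) (m : nat) :
  (Cmod a < 1)%R ->
  is_period_RInt (fun t => (/ e t) ^ m * geom e a t) (RtoC (2 * PI) * a ^ m).
Proof.
  intros Ha. rewrite <- (complete_hom_0r a m).
  refine (is_period_RInt_eq (fun t => (/ e t) ^ m * (1 * geom e a t)) _ _ _ _ _ _).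
  { intros t. rewrite Cmult_1_l. reflexivity. }
  { reflexivity. }
  apply (is_period_RInt_inv_pow_mul_geom (fun _ => 1)); auto.
  - split.
    + apply Ccontinuous_const.
    + exists 1%R. intros t. rewrite Cmod_1. lra.
    + intros i Hi. refine (is_period_RInt_eq _ _ _ _ _ _ (unit_loop_pow e He i Hi)); auto.
      intros t. symmetry. apply Cmult_1_r.
  - intros [|i].
    + refine (is_period_RInt_eq _ _ _ _ _ _ (is_period_RInt_const 1)); intros; ring.
    + refine (is_period_RInt_eq _ _ _ _ _ _ (unit_loop_inv_pow e He (S i) ltac:(lia)));
        intros; rewrite ?Cpow_S; ring.
Qed.

Lemma is_period_RInt_inv_pow_geom2 (a b : C) (n : nat) :
  (Cmod a < 1)%R -> (Cmod b < 1)%R ->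
  is_period_RInt (fun t => (/ e t) ^ n * (geom e a t * geom e b t))
    (RtoC (2 * PI) * complete_hom b a n).
Proof.
  intros Ha Hb. apply is_period_RInt_inv_pow_mul_geom; auto.
  - apply analytic_along_geom; auto.
  - intros i. apply is_period_RInt_inv_pow_geom; auto.
Qed.

End UnitLoop.

(* Partial fractions: [1/((1 - c z)(1 - b/z)) = (1/(1 - c z) + 1/(1 - b/z) - 1) / (1 - c b)]. *)
Lemma is_period_RInt_pow_geom_geom_inv (e : R -> C) (c b : C) (m : nat) :
  unit_loop e -> (Cmod c < 1)%R -> (Cmod b < 1)%R -> (1 <= m)%nat ->
  is_period_RInt (fun t => e t ^ m * (geom e c t * geom (fun t => / e t) b t))
    (RtoC (2 * PI) * b ^ m / (1 - c * b)).
Proof.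
  intros He Hc Hb Hm.
  pose proof (unit_loop_inv e He) as Hie.
  pose proof (unit_loop_neq0 e) as Hnz.
  assert (Hcb : 1 - c * b <> 0) by (apply one_sub_mul_neq0; lra).
  pose proof (analytic_along_pow_mul e _ (analytic_along_geom e He c Hc) m Hm) as Hgc.
  assert (Hgb : is_period_RInt (fun t => e t ^ m * geom (fun t => / e t) b t)
                               (RtoC (2 * PI) * b ^ m)).
  { refine (is_period_RInt_eq _ _ _ _ _ _ (is_period_RInt_inv_pow_geom _ Hie b m Hb)); auto.
    intros t. cbv beta. f_equal. f_equal. field. auto. }
  refine (is_period_RInt_eq _ _ _ _ _ _ (is_period_RInt_scal (/ (1 - c * b)) _ _
    (is_period_RInt_minus _ _ _ _ (is_period_RInt_plus _ _ _ _ Hgc Hgb)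
                                  (unit_loop_pow e He m Hm)))).
  - intros t. pose proof (sub_neq0_Cmod_1 (e t) b (unit_loop_Cmod e He t) Hb).
    pose proof (geom_denom_neq0 e He c t Hc).
    unfold geom. field. repeat split; auto.
  - field. auto.
Qed.

Lemma Cconj_RtoC (r : R) : Cconj (RtoC r) = RtoC r.
Proof. unfold Cconj, RtoC. simpl. rewrite Ropp_0. reflexivity. Qed.

Lemma Cconj_Cmod_1 (z : C) : Cmod z = 1%R -> Cconj z = / z.
Proof.
  intros Hz. assert (Hz0 : z <> 0) by (intros E; rewrite E, Cmod_0 in Hz; lra).
  replace (Cconj z) with (/ z * (z * Cconj z)) by (field; auto).
  rewrite <- Cmod2_conj, Hz, pow1. apply Cmult_1_r.
Qed.

Definition poisson (a : C) (t : R) : C :=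
  geom (fun t => / circ t) a t + Cconj a * circ t * geom circ (Cconj a) t.

Lemma poisson_kernel_circ (a : C) (t : R) :
  (Cmod a < 1)%R -> RtoC ((1 - Cmod a ^ 2) / Cmod (circ t - a) ^ 2) = poisson a t.
Proof.
  intros Ha.
  pose proof (unit_loop_inv circ unit_loop_circ) as Hic.
  assert (Ha' : (Cmod (Cconj a) < 1)%R) by (rewrite Cmod_conj; auto).
  pose proof (circ_neq0 t) as Hz.
  pose proof (sub_neq0_Cmod_1 _ _ (Cmod_circ t) Ha) as Hza.
  pose proof (geom_denom_neq0 _ Hic a t Ha) as Hga.
  pose proof (geom_denom_neq0 _ unit_loop_circ (Cconj a) t Ha') as Hgca.
  rewrite RtoC_div by (apply pow_nonzero; intros E; apply Hza, Cmod_eq_0; auto).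
  rewrite RtoC_minus, !Cmod2_conj, Cminus_conj, (Cconj_Cmod_1 _ (Cmod_circ t)).
  unfold poisson, geom. field. repeat split; auto.
Qed.

Lemma is_period_RInt_circ_pow_poisson2 (a b : C) (n : nat) :
  (Cmod a < 1)%R -> (Cmod b < 1)%R ->
  is_period_RInt (fun t => circ t ^ n * (poisson a t * poisson b t))
    (RtoC (2 * PI) * (complete_hom b a n + Cconj a * b ^ S n / (1 - Cconj a * b)
                      + Cconj b * a ^ S n / (1 - Cconj b * a))).
Proof.
  intros Ha Hb.
  assert (Ha' : (Cmod (Cconj a) < 1)%R) by (rewrite Cmod_conj; auto).
  assert (Hb' : (Cmod (Cconj b) < 1)%R) by (rewrite Cmod_conj; auto).
  pose proof (unit_loop_inv circ unit_loop_circ) as Hic.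
  pose proof (is_period_RInt_inv_pow_geom2 _ Hic a b n Ha Hb) as Hanti.
  pose proof (is_period_RInt_pow_geom_geom_inv circ (Cconj a) b (S n) unit_loop_circ Ha' Hb
    ltac:(lia)) as Hmixa.
  pose proof (is_period_RInt_pow_geom_geom_inv circ (Cconj b) a (S n) unit_loop_circ Hb' Ha
    ltac:(lia)) as Hmixb.
  pose proof (is_period_RInt_pow_geom2 _ unit_loop_circ (Cconj a) (Cconj b) (S (S n)) Ha' Hb'
    ltac:(lia)) as Hana.
  refine (is_period_RInt_eq _ _ _ _ _ _
    (is_period_RInt_plus _ _ _ _
      (is_period_RInt_plus _ _ _ _
        (is_period_RInt_plus _ _ _ _ Hanti (is_period_RInt_scal (Cconj a) _ _ Hmixa))
        (is_period_RInt_scal (Cconj b) _ _ Hmixb))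
      (is_period_RInt_scal (Cconj a * Cconj b) _ _ Hana))).
  - intros t. replace (/ / circ t) with (circ t) by (field; apply circ_neq0).
    unfold poisson. rewrite !Cpow_S. ring.
  - unfold Cdiv. ring.
Qed.

Lemma moment_integrand_poisson (a b : C) (n : nat) (t : R) :
  (Cmod a < 1)%R -> (Cmod b < 1)%R ->
  moment_integrand a b n t =
  RtoC (/ (2 * PI) * (Cmod (1 - a * Cconj b) ^ 2 / (1 - Cmod (a * Cconj b) ^ 2)))
  * (circ t ^ n * (poisson a t * poisson b t)).
Proof.
  intros Ha Hb. unfold moment_integrand, dens.
  rewrite RtoC_mult, (RtoC_mult (_ * _)), !poisson_kernel_circ by auto.
  ring.
Qed.

Lemma RtoC_one_sub_Cmod2 (x : C) : RtoC (1 - Cmod x ^ 2) = 1 - x * Cconj x.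
Proof. rewrite RtoC_minus, Cmod2_conj. reflexivity. Qed.

Lemma is_period_RInt_moment_integrand (a b : C) (n : nat) :
  (Cmod a < 1)%R -> (Cmod b < 1)%R ->
  is_period_RInt (moment_integrand a b n)
    ((1 - a * Cconj b) * (1 - Cconj a * b) / (1 - a * Cconj b * (Cconj a * b))
     * (complete_hom b a n + Cconj a * b ^ S n / (1 - Cconj a * b)
        + Cconj b * a ^ S n / (1 - Cconj b * a))).
Proof.
  intros Ha Hb.
  refine (is_period_RInt_eq _ _ _ _ _ _
    (is_period_RInt_scal _ _ _ (is_period_RInt_circ_pow_poisson2 a b n Ha Hb))).
  - intros t. symmetry. apply moment_integrand_poisson; auto.
  - assert (H2PI : (2 * PI)%R <> 0%R) by (pose proof PI_RGT_0; lra).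
    assert (Hab : 1 - Cconj a * b <> 0) by (apply one_sub_mul_neq0; rewrite ?Cmod_conj; lra).
    assert (Hba : 1 - Cconj b * a <> 0) by (apply one_sub_mul_neq0; rewrite ?Cmod_conj; lra).
    assert (HKC : 1 - a * Cconj b * Cconj (a * Cconj b) <> 0).
    { apply one_sub_mul_neq0; rewrite ?Cmod_conj, Cmod_mult, ?Cmod_conj;
        pose proof (Cmod_ge_0 a); nra. }
    assert (HK : (1 - Cmod (a * Cconj b) ^ 2)%R <> 0%R).
    { intros E. apply HKC. rewrite <- RtoC_one_sub_Cmod2, E. reflexivity. }
    rewrite RtoC_mult, RtoC_inv, RtoC_div, RtoC_one_sub_Cmod2, Cmod2_conj by auto.
    rewrite Cminus_conj, Cconj_RtoC, (Cmult_conj a), Cconj_conj in *.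
    field. repeat split; auto.
    intros E. apply RtoC_inj in E. auto.
Qed.

Theorem theorem4 (phi1 phi2 : C) (n : nat) :
  (Cmod phi1 < 1)%R -> (Cmod phi2 < 1)%R ->
  (phi1 <> phi2 ->
   is_RInt (V := C_R_CompleteNormedModule) (moment_integrand phi1 phi2 n) 0 (2 * PI)
     (( RtoC (1 - (Cmod phi2) ^ 2) * (1 - Cconj phi1 * phi2) * phi1 ^ (n + 1)
      - RtoC (1 - (Cmod phi1) ^ 2) * (1 - phi1 * Cconj phi2) * phi2 ^ (n + 1))
      / ((phi1 - phi2) * RtoC (1 - (Cmod (phi1 * Cconj phi2)) ^ 2)))) /\
  (phi1 = phi2 ->
   is_RInt (V := C_R_CompleteNormedModule) (moment_integrand phi1 phi2 n) 0 (2 * PI)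
     (RtoC ((1 + INR n + (1 - INR n) * (Cmod phi1) ^ 2) / (1 + (Cmod phi1) ^ 2))
      * phi1 ^ n)).
Proof.
  intros Ha Hb.
  pose proof (is_period_RInt_moment_integrand phi1 phi2 n Ha Hb) as Hmom.
  assert (Hab : 1 - Cconj phi1 * phi2 <> 0) by (apply one_sub_mul_neq0; rewrite ?Cmod_conj; lra).
  assert (Hba : 1 - Cconj phi2 * phi1 <> 0) by (apply one_sub_mul_neq0; rewrite ?Cmod_conj; lra).
  assert (HK : 1 - phi1 * Cconj phi2 * Cconj (phi1 * Cconj phi2) <> 0).
  { apply one_sub_mul_neq0; rewrite ?Cmod_conj, Cmod_mult, ?Cmod_conj;
      pose proof (Cmod_ge_0 phi1); nra. }
  rewrite !RtoC_one_sub_Cmod2, Cmult_conj, Cconj_conj in *.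
  split.
  - intros Hne. refine (is_period_RInt_eq _ _ _ _ _ _ Hmom); [reflexivity |].
    assert (H12 : phi1 - phi2 <> 0) by (apply Cminus_eq_contra; auto).
    assert (H21 : phi2 - phi1 <> 0) by (apply Cminus_eq_contra; auto).
    rewrite complete_hom_neq, Nat.add_1_r by auto.
    field. repeat split; auto.
  - intros <-. refine (is_period_RInt_eq _ _ _ _ _ _ Hmom); [reflexivity |].
    assert (H1 : 1 + phi1 * Cconj phi1 <> 0).
    { rewrite <- Cmod2_conj, <- RtoC_plus. intros E. apply RtoC_inj in E.
      pose proof (pow2_ge_0 (Cmod phi1)). lra. }
    rewrite RtoC_div by (intros E; apply H1; rewrite <- Cmod2_conj, <- RtoC_plus, E; reflexivity).
    rewrite complete_hom_diag, S_INR, !RtoC_plus, RtoC_mult, RtoC_minus, !Cmod2_conj, Cpow_S.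
    field. repeat split; auto.
Qed.
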